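(* Let $\delta(n)=o(n)$. Then there is $n_0$ such that for all $n\ge n_0$, every $\delta(n)$-random labeled graph on $n$ nodes has diameter exactly $2$.
   Context: $C(x\mid y)$ denotes the Kolmogorov complexity of $x$ given $y$ with respect to a fixed universal Turing machine. A labeled graph $G$ on $\{1,\dots,n\}$ is encoded by the binary string $E(G)$ of length $n(n-1)/2$ whose $i$-th bit indicates presence of the $i$-th possible edge in lexicographic order. With $\mathcal G$ the set of all labeled graphs on $\{1,\dots,n\}$, $G$ is $\delta(n)$-random if $C(E(G)\mid n,\delta,\mathcal G)\ge n(n-1)/2-\delta(n)$. *)

From Stdlib Require Import ClassicalEpsilon.
From mathcomp Require Import all_boot.
Set Implicit Arguments. Unset Strict Implicit. Unset Printing Implicit Defensive.

Inductive prf : Type :=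
  | PZero : prf
  | PSucc : prf
  | PProj : nat -> prf
  | PComp : prf -> seq prf -> prf
  | PPrec : prf -> prf -> prf
  | PMu   : prf -> prf.

Inductive eval : prf -> seq nat -> nat -> Prop :=
  | ev_zero v : eval PZero v 0
  | ev_succ x v : eval PSucc (x :: v) x.+1
  | ev_proj i v : eval (PProj i) v (nth 0 v i)
  | ev_comp f gs v ws y : evals gs v ws -> eval f ws y -> eval (PComp f gs) v y
  | ev_prec0 f g v y : eval f v y -> eval (PPrec f g) (0 :: v) y
  | ev_precS f g k v z y :
      eval (PPrec f g) (k :: v) z -> eval g (k :: z :: v) y ->
      eval (PPrec f g) (k.+1 :: v) y
  | ev_mu f v n :
      eval f (n :: v) 0 ->
      (forall m, m < n -> exists k, eval f (m :: v) k.+1) ->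
      eval (PMu f) v n
with evals : seq prf -> seq nat -> seq nat -> Prop :=
  | evs_nil v : evals [::] v [::]
  | evs_cons g gs v y ys : eval g v y -> evals gs v ys -> evals (g :: gs) v (y :: ys).

(* Bijective coding of binary strings by natural numbers:
   [::] |-> 0, false :: s |-> 2 code s + 1, true :: s |-> 2 code s + 2. *)
Fixpoint code (s : seq bool) : nat :=
  match s with
  | [::] => 0
  | b :: s' => ((code s').*2 + b).+1
  end.

(* The partial computable function p, viewed as a conditional description
   method: program q with condition y describes x. *)
Definition describes (p : prf) (q y x : seq bool) : Prop :=
  eval p [:: code q; code y] (code x).

(* p is a universal (additively optimal) machine: it simulates every
   computable conditional description method with constant overhead,
   i.e. C_p(x|y) <= C_f(x|y) + c_f for all x, y. *)
Definition universal (p : prf) : Prop :=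
  forall f : prf, exists c : nat, forall q y x : seq bool,
    describes f q y x -> exists2 q', describes p q' y x & size q' <= size q + c.

(* Kolmogorov complexity C_p(x|y): the least length of a program q with
   describes p q y x (0 if there is none, which never happens for a
   universal p). *)
Definition has_descr_of_size (p : prf) (x y : seq bool) (k : nat) : bool :=
  if excluded_middle_informative (exists q, size q = k /\ describes p q y x)
  then true else false.

Lemma KC_ex (p : prf) (x y : seq bool) :
  (exists q, describes p q y x) -> exists k, has_descr_of_size p x y k.
Proof.
move=> [q Hq]; exists (size q); rewrite /has_descr_of_size.
by case: excluded_middle_informative => // -[]; exists q.
Qed.

Definition KC (p : prf) (x y : seq bool) : nat :=
  match excluded_middle_informative (exists q, describes p q y x) with
  | left H => ex_minn (KC_ex H)
  | right _ => 0
  end.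

(* Labeled graphs on n nodes (nodes 0..n-1 play the role of 1..n).     *)
(* A graph is a symmetric irreflexive relation adj : rel 'I_n.         *)

(* E(G): bit i tells whether the i-th pair (i<j) in lexicographic order
   (0,1),(0,2),...,(0,n-1),(1,2),... is an edge; length n(n-1)/2. *)
Definition graph_code (n : nat) (adj : rel 'I_n) : seq bool :=
  flatten [seq [seq adj i j | j <- [seq j : 'I_n <- enum 'I_n | i < j]] | i : 'I_n <- enum 'I_n].

(* Condition (n, delta(n)); the set of all labeled graphs on n nodes is
   determined by n.  Self-delimiting unary encoding. *)
Definition cond_info (n d : nat) : seq bool := nseq n true ++ false :: nseq d true.

Definition random_graph (U : prf) (delta : nat -> nat) (n : nat) (adj : rel 'I_n) : Prop :=
  n * (n - 1) %/ 2 - delta n <= KC U (graph_code adj) (cond_info n (delta n)).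

Definition small_o_n (delta : nat -> nat) : Prop :=
  forall k : nat, 0 < k -> exists N, forall n, N <= n -> k * delta n <= n.

Definition walk_le (n : nat) (adj : rel 'I_n) (i j : 'I_n) (k : nat) : Prop :=
  exists s : seq 'I_n, [/\ size s <= k, path adj i s & last i s = j].

Definition is_dist (n : nat) (adj : rel 'I_n) (i j : 'I_n) (k : nat) : Prop :=
  walk_le adj i j k /\ forall k', k' < k -> ~ walk_le adj i j k'.

Definition diameter_is (n : nat) (adj : rel 'I_n) (d : nat) : Prop :=
  (forall i j : 'I_n, exists2 k, is_dist adj i j k & k <= d) /\
  (exists i j : 'I_n, is_dist adj i j d).

(* A graph on [n] nodes has diameter other than 2 exactly when it is complete or
   has a far pair: two nonadjacent nodes without common neighbour.  For a fixed
   pair, each of the other [n - 2] nodes is a common neighbour for one of the four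
   choices of its two edges to the pair, so at most
   [n ^ 2 * (3/4) ^ (n - 2) * 2 ^ (n (n - 1) / 2)] edge strings have a far pair.
   Given [n], such a graph is therefore described by its rank among these strings,
   a program [Omega(n)] bits shorter than its edge string; the universal machine
   simulates this decoder with constant overhead, so for [delta(n) = o(n)] no
   large [delta(n)]-random graph is of this kind. *)

From Stdlib Require Import ClassicalEpsilon.
From mathcomp Require Import all_boot.
From mathcomp Require Import zify.
Set Implicit Arguments. Unset Strict Implicit. Unset Printing Implicit Defensive.

(** * Programs for total functions *)

Notation arg v i := (nth 0 v i).

Definition computes (p : prf) (F : seq nat -> nat) := forall v, eval p v (F v).
Definition computes_all (ps : seq prf) (F : seq nat -> seq nat) :=
  forall v, evals ps v (F v).

Lemma computes_ext p F F' : computes p F -> F =1 F' -> computes p F'.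
Proof. by move=> pF eF v; rewrite -eF. Qed.

Lemma computes_zero : computes PZero (fun _ => 0).
Proof. by move=> v; apply: ev_zero. Qed.

Lemma computes_proj i : computes (PProj i) (fun v => arg v i).
Proof. by move=> v; apply: ev_proj. Qed.

Lemma computes_comp f F gs Gs :
  computes f F -> computes_all gs Gs -> computes (PComp f gs) (fun v => F (Gs v)).
Proof. by move=> fF gsGs v; apply: ev_comp (gsGs v) (fF _). Qed.

Lemma computes_all_nil : computes_all [::] (fun _ => [::]).
Proof. by move=> v; apply: evs_nil. Qed.

Lemma computes_all_cons g G gs Gs :
  computes g G -> computes_all gs Gs -> computes_all (g :: gs) (fun v => G v :: Gs v).
Proof. by move=> gG gsGs v; apply: evs_cons. Qed.

Definition prf_succ g := PComp PSucc [:: g].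

Lemma computes_succ g G : computes g G -> computes (prf_succ g) (fun v => (G v).+1).
Proof.
by move=> gG v; apply: ev_comp (evs_cons (gG v) (evs_nil _)) (ev_succ _ _).
Qed.

Fixpoint prim_rec (F G : seq nat -> nat) (x : nat) (w : seq nat) : nat :=
  if x is k.+1 then G (k :: prim_rec F G k w :: w) else F w.

Definition prf_rec f g hs := PComp (PPrec f g) hs.

Lemma computes_rec f g F G h H hs Hs :
  computes f F -> computes g G -> computes h H -> computes_all hs Hs ->
  computes (prf_rec f g (h :: hs)) (fun v => prim_rec F G (H v) (Hs v)).
Proof.
move=> fF gG hH hsHs v; apply: ev_comp (evs_cons (hH v) (hsHs v)) _.
by elim: (H v) => [|k IHk] /=; [apply: ev_prec0 (fF _) | apply: ev_precS IHk (gG _)].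
Qed.

Lemma eval_mu_least f F v n : computes f F ->
  F (n :: v) = 0 -> (forall m, m < n -> F (m :: v) != 0) -> eval (PMu f) v n.
Proof.
move=> fF Fn0 Fm; apply: ev_mu; first by rewrite -Fn0.
move=> m /Fm; case Fm0: (F (m :: v)) => [|k] // _.
by exists k; rewrite -Fm0.
Qed.

Create HintDb prf.
#[local] Hint Resolve computes_zero computes_proj computes_comp computes_all_nil
  computes_all_cons computes_succ computes_rec : prf.

(* Reduces [computes p F] to an identity between [F] and the function that the
   combinator lemmas assign to [p]. *)
Ltac solve_computes :=
  eapply computes_ext; [solve [eauto 40 with prf] | move=> v /=].

Definition prf_app1 f g := PComp f [:: g].
Definition prf_app2 f g h := PComp f [:: g; h].
Notation P0 := (PProj 0). Notation P1 := (PProj 1). Notation P2 := (PProj 2).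
Notation P3 := (PProj 3). Notation P4 := (PProj 4). Notation P5 := (PProj 5).

Lemma computes_app1 f F g G :
  computes f F -> computes g G -> computes (prf_app1 f g) (fun v => F [:: G v]).
Proof. by move=> *; rewrite /prf_app1; solve_computes. Qed.

Lemma computes_app2 f F g G h H :
  computes f F -> computes g G -> computes h H ->
  computes (prf_app2 f g h) (fun v => F [:: G v; H v]).
Proof. by move=> *; rewrite /prf_app2; solve_computes. Qed.
#[local] Hint Resolve computes_app1 computes_app2 : prf.

Definition prf_add := prf_rec P0 (prf_succ P1) [:: P0; P1].
Lemma computes_add : computes prf_add (fun v => arg v 0 + arg v 1).
Proof. by rewrite /prf_add; solve_computes; elim: (arg v 0) => //= k ->. Qed.
#[local] Hint Resolve computes_add : prf.

Definition prf_mul := prf_rec PZero (prf_app2 prf_add P1 P2) [:: P0; P1].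
Lemma computes_mul : computes prf_mul (fun v => arg v 0 * arg v 1).
Proof. by rewrite /prf_mul; solve_computes; elim: (arg v 0) => //= k ->; lia. Qed.
#[local] Hint Resolve computes_mul : prf.

Definition prf_pred := prf_rec PZero P0 [:: P0].
Lemma computes_pred : computes prf_pred (fun v => (arg v 0).-1).
Proof. by rewrite /prf_pred; solve_computes; case: (arg v 0). Qed.
#[local] Hint Resolve computes_pred : prf.

Definition prf_sub := prf_rec P0 (prf_app1 prf_pred P1) [:: P1; P0].
Lemma computes_sub : computes prf_sub (fun v => arg v 0 - arg v 1).
Proof.
rewrite /prf_sub; solve_computes.
by elim: (arg v 1) => /= [|k ->]; rewrite ?subn0 ?subnS.
Qed.
#[local] Hint Resolve computes_sub : prf.

Definition prf_one := prf_succ PZero.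
Lemma computes_one : computes prf_one (fun _ => 1).
Proof. by rewrite /prf_one; solve_computes. Qed.
#[local] Hint Resolve computes_one : prf.

Definition prf_eq0 g := prf_app2 prf_sub prf_one g.
Lemma computes_eq0 g G : computes g G -> computes (prf_eq0 g) (fun v => G v == 0 : nat).
Proof. by move=> gG; rewrite /prf_eq0; solve_computes; case: (G v). Qed.
#[local] Hint Resolve computes_eq0 : prf.

Definition prf_gt0 g := prf_eq0 (prf_eq0 g).
Lemma computes_gt0 g G : computes g G -> computes (prf_gt0 g) (fun v => 0 < G v : nat).
Proof. by move=> gG; rewrite /prf_gt0; solve_computes; case: (G v). Qed.
#[local] Hint Resolve computes_gt0 : prf.

Definition prf_lt := prf_gt0 (prf_app2 prf_sub P1 P0).
Lemma computes_lt : computes prf_lt (fun v => arg v 0 < arg v 1 : nat).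
Proof. by rewrite /prf_lt; solve_computes; rewrite subn_gt0. Qed.
#[local] Hint Resolve computes_lt : prf.

Definition prf_le := prf_eq0 (prf_app2 prf_sub P0 P1).
Lemma computes_le : computes prf_le (fun v => arg v 0 <= arg v 1 : nat).
Proof. by rewrite /prf_le; solve_computes; rewrite subn_eq0. Qed.
#[local] Hint Resolve computes_le : prf.

Definition prf_eq := prf_eq0 (prf_app2 prf_add (prf_app2 prf_sub P0 P1) (prf_app2 prf_sub P1 P0)).
Lemma computes_eq : computes prf_eq (fun v => arg v 0 == arg v 1 : nat).
Proof. by rewrite /prf_eq; solve_computes; rewrite addn_eq0 !subn_eq0 eqn_leq. Qed.
#[local] Hint Resolve computes_eq : prf.

Definition prf_or := prf_gt0 prf_add.
Lemma computes_or : computes prf_or (fun v => 0 < arg v 0 + arg v 1 : nat).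
Proof. by rewrite /prf_or; solve_computes. Qed.
#[local] Hint Resolve computes_or : prf.

Definition prf_if c a b := prf_app2 prf_add (prf_app2 prf_mul c a) (prf_app2 prf_mul (prf_eq0 c) b).
Lemma computes_if c a b (C : seq nat -> bool) A B :
  computes c (fun v => C v : nat) -> computes a A -> computes b B ->
  computes (prf_if c a b) (fun v => if C v then A v else B v).
Proof. by move=> *; rewrite /prf_if; solve_computes; case: (C v) => /=; lia. Qed.

Definition prf_odd := prf_rec PZero (prf_eq0 P1) [:: P0].
Lemma computes_odd : computes prf_odd (fun v => odd (arg v 0) : nat).
Proof. by rewrite /prf_odd; solve_computes; elim: (arg v 0) => //= k ->; case: (odd k). Qed.
#[local] Hint Resolve computes_odd : prf.

Definition prf_half := prf_rec PZero (prf_app2 prf_add P1 (prf_app1 prf_odd P0)) [:: P0].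
Lemma computes_half : computes prf_half (fun v => (arg v 0)./2).
Proof.
by rewrite /prf_half; solve_computes; elim: (arg v 0) => //= k ->; rewrite uphalf_half; lia.
Qed.
#[local] Hint Resolve computes_half : prf.

Definition prf_shift := prf_rec P0 (prf_app1 prf_half P1) [:: P0; P1].
Lemma computes_shift : computes prf_shift (fun v => arg v 1 %/ 2 ^ arg v 0).
Proof.
rewrite /prf_shift; solve_computes; elim: (arg v 0) => /= [|k ->]; first by rewrite divn1.
by rewrite expnSr divnMA divn2.
Qed.
#[local] Hint Resolve computes_shift : prf.

Definition prf_pow2 := prf_rec prf_one (prf_app2 prf_add P1 P1) [:: P0].
Lemma computes_pow2 : computes prf_pow2 (fun v => 2 ^ arg v 0).
Proof. by rewrite /prf_pow2; solve_computes; elim: (arg v 0) => //= k ->; rewrite expnS; lia. Qed.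
#[local] Hint Resolve computes_pow2 : prf.

(* The [p]-th letter of the string with code [m] (see [code_bitE]). *)
Definition code_bit (m p : nat) : bool := odd (m.+1 %/ 2 ^ p).

Definition prf_code_bit := prf_app1 prf_odd (prf_app2 prf_shift P1 (prf_succ P0)).
Lemma computes_code_bit : computes prf_code_bit (fun v => code_bit (arg v 0) (arg v 1)).
Proof. by rewrite /prf_code_bit; solve_computes. Qed.
#[local] Hint Resolve computes_code_bit : prf.

(** * Indexing the pairs of nodes *)

(* Pairs [(i, j)], [i < j < n], are listed lexicographically as in [graph_code];
   [row_start n i] of them have first component below [i]. *)
Fixpoint row_start (n a : nat) : nat :=
  if a is i.+1 then row_start n i + (n.-1 - i) else 0.

Definition npairs (n : nat) : nat := row_start n n.
Definition pair_index (n i j : nat) : nat := row_start n i + (j - i).-1.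
Definition edge_index (n i k : nat) : nat :=
  if i < k then pair_index n i k else pair_index n k i.

Lemma leq_row_start n a b : a <= b -> row_start n a <= row_start n b.
Proof.
elim: b => [|b IHb]; first by rewrite leqn0 => /eqP ->.
by rewrite leq_eqVlt => /orP [/eqP -> // | /IHb] /=; lia.
Qed.

Lemma pair_index_lt_row_start n i j : i < j -> j < n -> pair_index n i j < row_start n i.+1.
Proof. by rewrite /pair_index /=; lia. Qed.

Lemma pair_index_lt_npairs n i j : i < j -> j < n -> pair_index n i j < npairs n.
Proof.
move=> ij jn; apply: leq_trans (pair_index_lt_row_start ij jn) _.
by apply: leq_row_start; lia.
Qed.

Lemma pair_index_inj n i j i' j' : i < j -> j < n -> i' < j' -> j' < n ->
  pair_index n i j = pair_index n i' j' -> i = i' /\ j = j'.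
Proof.
move=> ij jn ij' jn' E.
have start_le i0 j0 : row_start n i0 <= pair_index n i0 j0 by rewrite /pair_index; lia.
have [ii'|ii'|ii'] := ltngtP i i'.
- have := pair_index_lt_row_start ij jn; have := leq_row_start n ii'.
  by have := start_le i' j'; lia.
- have := pair_index_lt_row_start ij' jn'; have := leq_row_start n ii'.
  by have := start_le i j; lia.
- by subst i'; move: E; rewrite /pair_index; lia.
Qed.

Lemma edge_indexE n i k : i != k -> edge_index n i k = pair_index n (minn i k) (maxn i k).
Proof. by rewrite /edge_index /minn /maxn; case: ltngtP => //; lia. Qed.

Lemma edge_index_lt_npairs n i k : i != k -> i < n -> k < n -> edge_index n i k < npairs n.
Proof. by move=> ik *; rewrite edge_indexE //; apply: pair_index_lt_npairs; lia. Qed.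

Lemma edge_index_neq n i j i' j' : i != j -> i' != j' -> i < n -> j < n -> i' < n -> j' < n ->
  ~ ((i = i' /\ j = j') \/ (i = j' /\ j = i')) -> edge_index n i j != edge_index n i' j'.
Proof.
move=> ij ij' *; apply/eqP; rewrite !edge_indexE // => /pair_index_inj.
by case; lia.
Qed.

Lemma npairsE n : npairs n = n * (n - 1) %/ 2.
Proof.
have rowsE a : a <= n -> 2 * row_start n a + (n - a) * (n - a - 1) = n * (n - 1).
  elim: a => [|a IHa] an; first by rewrite subn0.
  have := IHa (ltnW an); rewrite /=.
  have -> : n - a = (n - a.+1).+1 by lia.
  have -> : n.-1 - a = n - a.+1 by lia.
  move: (row_start n a) (n - a.+1) (n * (n - 1)) => r [|k] x; rewrite /= ?subn0 ?subSS ?subn0; nia.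
by have := rowsE n (leqnn n); rewrite /npairs subnn mul0n addn0 => <-; lia.
Qed.

Lemma npairs_ge n : 2 * (n - 2) <= npairs n.
Proof.
rewrite npairsE; have : 4 * (n - 2) <= n * (n - 1) by nia.
by move: (n * (n - 1)) => m; lia.
Qed.

(** * Far pairs *)

(* [b] is read as the edge string of a graph on [n] nodes; a far pair is a
   nonadjacent pair of nodes without common neighbour. *)
Definition not_common_nbr (b : nat -> bool) n i j k :=
  (k == i) || (k == j) || ~~ (b (edge_index n i k) && b (edge_index n j k)).

Definition far_pair (b : nat -> bool) n i j :=
  (i < j) && ~~ b (pair_index n i j) && all (not_common_nbr b n i j) (iota 0 n).

Definition has_far_pair (b : nat -> bool) n :=
  has (fun i => has (far_pair b n i) (iota 0 n)) (iota 0 n).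

Lemma eq_has_far_pair (b1 b2 : nat -> bool) n :
  {in gtn (npairs n), b1 =1 b2} -> has_far_pair b1 n = has_far_pair b2 n.
Proof.
move=> eb; apply: eq_in_has => i; rewrite mem_iota => /andP [_ i_n].
apply: eq_in_has => j; rewrite mem_iota => /andP [_ j_n] /=.
rewrite /far_pair; case: ltnP => //= ij.
rewrite eb ?inE; last exact: pair_index_lt_npairs.
congr (_ && _); apply: eq_in_all => k; rewrite mem_iota => /andP [_ k_n].
rewrite /not_common_nbr; case: eqP => //= ki; case: eqP => //= kj.
by rewrite !eb ?inE //; apply: edge_index_lt_npairs => //; apply/eqP; lia.
Qed.

Lemma has_iota_rcons (p : pred nat) t : has p (iota 0 t.+1) = has p (iota 0 t) || p t.
Proof. by rewrite -addn1 iotaD has_cat /= orbF. Qed.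

Lemma all_iota_rcons (p : pred nat) t : all p (iota 0 t.+1) = all p (iota 0 t) && p t.
Proof. by rewrite -addn1 iotaD all_cat /= andbT. Qed.

Definition prf_row_start :=
  prf_rec PZero (prf_app2 prf_add P1 (prf_app2 prf_sub (prf_app1 prf_pred P2) P0)) [:: P0; P1].
Lemma computes_row_start : computes prf_row_start (fun v => row_start (arg v 1) (arg v 0)).
Proof. by rewrite /prf_row_start; solve_computes; elim: (arg v 0) => //= k ->. Qed.
#[local] Hint Resolve computes_row_start : prf.

Definition prf_pair_index :=
  prf_app2 prf_add (prf_app2 prf_row_start P1 P0) (prf_app1 prf_pred (prf_app2 prf_sub P2 P1)).
Lemma computes_pair_index :
  computes prf_pair_index (fun v => pair_index (arg v 0) (arg v 1) (arg v 2)).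
Proof. by rewrite /prf_pair_index; solve_computes. Qed.
#[local] Hint Resolve computes_pair_index : prf.

Definition prf_edge_index :=
  prf_if (prf_app2 prf_lt P1 P2) prf_pair_index (PComp prf_pair_index [:: P0; P2; P1]).
Lemma computes_edge_index :
  computes prf_edge_index (fun v => edge_index (arg v 0) (arg v 1) (arg v 2)).
Proof. by apply: computes_if; solve_computes. Qed.
#[local] Hint Resolve computes_edge_index : prf.

Definition prf_not_common_nbr :=
  prf_app2 prf_or (prf_app2 prf_or (prf_app2 prf_eq P0 P3) (prf_app2 prf_eq P0 P4))
    (prf_eq0 (prf_app2 prf_mul (prf_app2 prf_code_bit P1 (PComp prf_edge_index [:: P2; P3; P0]))
                               (prf_app2 prf_code_bit P1 (PComp prf_edge_index [:: P2; P4; P0])))).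
Lemma computes_not_common_nbr : computes prf_not_common_nbr
  (fun v => not_common_nbr (code_bit (arg v 1)) (arg v 2) (arg v 3) (arg v 4) (arg v 0)).
Proof.
rewrite /prf_not_common_nbr; solve_computes; rewrite /not_common_nbr.
by do 2!case: (_ == _); do 2!case: code_bit.
Qed.
#[local] Hint Resolve computes_not_common_nbr : prf.

Definition prf_no_common_nbr_below :=
  prf_rec prf_one (prf_app2 prf_mul P1 (PComp prf_not_common_nbr [:: P0; P2; P3; P4; P5]))
    [:: P0; P1; P2; P3; P4].
Lemma computes_no_common_nbr_below : computes prf_no_common_nbr_below (fun v =>
  all (not_common_nbr (code_bit (arg v 1)) (arg v 2) (arg v 3) (arg v 4)) (iota 0 (arg v 0)) : nat).
Proof.
rewrite /prf_no_common_nbr_below; solve_computes.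
elim: (arg v 0) => // k IHk; rewrite all_iota_rcons /= IHk.
by case: all; case: not_common_nbr.
Qed.
#[local] Hint Resolve computes_no_common_nbr_below : prf.

Definition prf_far_pair :=
  prf_app2 prf_mul
    (prf_app2 prf_mul (prf_app2 prf_lt P2 P3)
                      (prf_eq0 (prf_app2 prf_code_bit P0 (PComp prf_pair_index [:: P1; P2; P3]))))
    (PComp prf_no_common_nbr_below [:: P1; P0; P1; P2; P3]).
Lemma computes_far_pair :
  computes prf_far_pair
    (fun v => far_pair (code_bit (arg v 0)) (arg v 1) (arg v 2) (arg v 3) : nat).
Proof.
rewrite /prf_far_pair; solve_computes; rewrite /far_pair.
by case: (_ < _); case: code_bit; case: all.
Qed.
#[local] Hint Resolve computes_far_pair : prf.

Definition prf_far_pair_below :=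
  prf_rec PZero (prf_app2 prf_or P1 (PComp prf_far_pair [:: P2; P3; P4; P0])) [:: P0; P1; P2; P3].
Lemma computes_far_pair_below : computes prf_far_pair_below (fun v =>
  has (far_pair (code_bit (arg v 1)) (arg v 2) (arg v 3)) (iota 0 (arg v 0)) : nat).
Proof.
rewrite /prf_far_pair_below; solve_computes.
elim: (arg v 0) => // k IHk; rewrite has_iota_rcons /= IHk.
by case: has; case: far_pair.
Qed.
#[local] Hint Resolve computes_far_pair_below : prf.

Definition prf_far_pair_rows :=
  prf_rec PZero (prf_app2 prf_or P1 (PComp prf_far_pair_below [:: P3; P2; P3; P0])) [:: P0; P1; P2].
Lemma computes_far_pair_rows : computes prf_far_pair_rows (fun v =>
  has (fun i => has (far_pair (code_bit (arg v 1)) (arg v 2) i) (iota 0 (arg v 2)))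
    (iota 0 (arg v 0)) : nat).
Proof.
rewrite /prf_far_pair_rows; solve_computes.
elim: (arg v 0) => // k IHk; rewrite has_iota_rcons /= IHk.
by case: has; case: has.
Qed.
#[local] Hint Resolve computes_far_pair_rows : prf.

Definition prf_has_far_pair := PComp prf_far_pair_rows [:: P1; P0; P1].
Lemma computes_has_far_pair :
  computes prf_has_far_pair (fun v => has_far_pair (code_bit (arg v 0)) (arg v 1) : nat).
Proof. by rewrite /prf_has_far_pair; solve_computes. Qed.
#[local] Hint Resolve computes_has_far_pair : prf.

(** * Codes of strings *)

Lemma code_cons b s : (code (b :: s)).+1 = b + (code s).+1 * 2.
Proof. by rewrite /= -muln2; case: b => /=; lia. Qed.

Lemma code_bitE s k : k < size s -> code_bit (code s) k = nth false s k.
Proof.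
rewrite /code_bit; elim: s k => [//|b s IHs] [|k] /= lt_k; rewrite code_cons.
  by rewrite expn0 divn1 oddD oddM /= andbF addbF; case: b.
rewrite expnS mulnC divnMA.
have -> : (b + 2 * (code s).+1) %/ 2 = (code s).+1 by case: b => /=; lia.
exact: IHs.
Qed.

Lemma code_ge s : 2 ^ size s <= (code s).+1.
Proof. by elim: s => [//|b s IHs]; rewrite code_cons /= expnS; lia. Qed.

Lemma code_lt s : (code s).+1 < 2 ^ (size s).+1.
Proof. by elim: s => [//|b s IHs]; rewrite code_cons /= expnS; case: b => /=; lia. Qed.

Lemma code_surj m : exists s, code s = m.
Proof.
elim/ltn_ind: m => -[|m] IHm; first by exists [::].
have [s code_s] := IHm m./2 (ltac:(lia)).
exists (odd m :: s) => /=; rewrite code_s.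
by have := odd_double_half m; case: (odd m) => /=; lia.
Qed.

Lemma code_inj : injective code.
Proof.
elim=> [|b1 s1 IHs] [|b2 s2] //= E.
have [-> /IHs -> //] : b1 = b2 /\ code s1 = code s2.
by case: b1 b2 E => [] [] /=; lia.
Qed.

Lemma code_nseq_true k : code (nseq k true) = 2 ^ k.+1 - 2.
Proof.
elim: k => [//|k IHk] /=; rewrite IHk [2 ^ k.+2]expnS.
have : 2 <= 2 ^ k.+1 by rewrite expnS; have := expn_gt0 2 k; lia.
lia.
Qed.

(** * Describing the graphs of diameter other than 2 *)

(* [m] codes the edge string of a graph on [n] nodes that has a far pair or is
   complete; the first two conjuncts say [m] codes a string of length
   [npairs n] (see [code_ge] and [code_lt]). *)
Definition describable (m n : nat) : bool :=
  (2 ^ npairs n - 1 <= m) && (m < 2 ^ (npairs n).+1 - 1) &&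
  (has_far_pair (code_bit m) n || (m == 2 ^ (npairs n).+1 - 2)).

Lemma describable_code s n : size s = npairs n ->
  describable (code s) n = has_far_pair (nth false s) n || (s == nseq (npairs n) true).
Proof.
move=> size_s; rewrite /describable.
have -> : (2 ^ npairs n - 1 <= code s) && (code s < 2 ^ (npairs n).+1 - 1).
  by have := code_ge s; have := code_lt s; rewrite size_s; lia.
rewrite -code_nseq_true (inj_eq code_inj) /=; congr (_ || _).
by apply: eq_has_far_pair => p; rewrite inE -size_s => /code_bitE.
Qed.

Lemma describable_tuple m n : describable m n -> exists s : (npairs n).-tuple bool,
  code s = m /\ has_far_pair (nth false s) n || (val s == nseq (npairs n) true).
Proof.
have [s <-] := code_surj m => Ds.
have size_s : size s == npairs n.
  move: Ds; rewrite /describable => /andP [/andP [ge_s lt_s] _].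
  have := code_ge s; have := code_lt s => lt_size ge_size.
  have : 2 ^ size s < 2 ^ (npairs n).+1 by lia.
  have : 2 ^ npairs n < 2 ^ (size s).+1 by lia.
  by rewrite !ltn_exp2l // => *; apply/eqP; lia.
by exists (Tuple size_s); rewrite -describable_code ?(eqP size_s).
Qed.

Fixpoint rank_below (n t : nat) : nat :=
  if t is m.+1 then rank_below n m + describable m n else 0.

Lemma leq_rank_below n s t : s <= t -> rank_below n s <= rank_below n t.
Proof.
elim: t => [|t IHt]; first by rewrite leqn0 => /eqP ->.
by rewrite leq_eqVlt => /orP [/eqP -> // | /IHt] /=; lia.
Qed.

Definition prf_describable :=
  let npairs := PComp prf_row_start [:: P1; P1] in
  prf_app2 prf_mul
    (prf_app2 prf_mul
      (prf_app2 prf_le (prf_app2 prf_sub (prf_app1 prf_pow2 npairs) prf_one) P0)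
      (prf_app2 prf_lt P0 (prf_app2 prf_sub (prf_app1 prf_pow2 (prf_succ npairs)) prf_one)))
    (prf_app2 prf_or prf_has_far_pair
      (prf_app2 prf_eq P0 (prf_app2 prf_sub (prf_app1 prf_pow2 (prf_succ npairs))
                                            (prf_succ prf_one)))).
Lemma computes_describable :
  computes prf_describable (fun v => describable (arg v 0) (arg v 1) : nat).
Proof.
rewrite /prf_describable; solve_computes; rewrite /describable /npairs.
by case: (_ <= _); case: (_ < _); case: has_far_pair; case: (_ == _).
Qed.
#[local] Hint Resolve computes_describable : prf.

Definition prf_rank_below :=
  prf_rec PZero (prf_app2 prf_add P1 (PComp prf_describable [:: P0; P2])) [:: P0; P1].
Lemma computes_rank_below : computes prf_rank_below (fun v => rank_below (arg v 1) (arg v 0)).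
Proof. by rewrite /prf_rank_below; solve_computes; elim: (arg v 0) => //= k ->. Qed.
#[local] Hint Resolve computes_rank_below : prf.

(* Vanishes first at the [q]-th describable number [m]. *)
Definition prf_rank_gap :=
  prf_app2 prf_sub (prf_succ P1) (PComp prf_rank_below [:: prf_succ P0; P2]).
Lemma computes_rank_gap :
  computes prf_rank_gap (fun v => (arg v 1).+1 - rank_below (arg v 2) (arg v 0).+1).
Proof. by rewrite /prf_rank_gap; solve_computes. Qed.

(* On the condition [cond_info n d], the position of its first [false]. *)
Definition prf_cond_length := PMu (prf_app2 prf_code_bit P2 P0).

Definition decoder := PComp (PMu prf_rank_gap) [:: P0; prf_cond_length].

Lemma eval_cond_length q n d : eval prf_cond_length [:: q; code (cond_info n d)] n.
Proof.
have bitE k : k <= n -> code_bit (code (cond_info n d)) k = (k != n).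
  move=> k_n; rewrite code_bitE; last by rewrite /cond_info size_cat size_nseq /=; lia.
  rewrite /cond_info nth_cat size_nseq; case: ltnP => [kn|nk].
    by rewrite nth_nseq kn; apply/esym/eqP; lia.
  have -> : k = n by lia.
  by rewrite subnn eqxx.
apply: (@eval_mu_least _ (fun v => code_bit (arg v 2) (arg v 0) : nat)).
- by solve_computes.
- by rewrite /= bitE // eqxx.
- by move=> m lt_mn /=; rewrite bitE ?(ltnW lt_mn) // (ltn_eqF lt_mn).
Qed.

Lemma eval_decoder n d x :
  describable x n -> eval decoder [:: rank_below n x; code (cond_info n d)] x.
Proof.
move=> Dx; apply: ev_comp.
  by apply: evs_cons (ev_proj _ _) (evs_cons (eval_cond_length _ _ _) (evs_nil _)).
apply: (eval_mu_least computes_rank_gap) => /=; first by rewrite Dx addn1 subnn.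
by move=> m lt_mx; have := leq_rank_below n lt_mx; rewrite /= subn_eq0 -ltnNge; lia.
Qed.

Lemma KC_le_size p q y x : describes p q y x -> KC p x y <= size q.
Proof.
move=> Dq; rewrite /KC; case: excluded_middle_informative => [ex_q|[]]; last by exists q.
case: ex_minnP => k _ min_k; apply: min_k.
by rewrite /has_descr_of_size; case: excluded_middle_informative => // -[]; exists q.
Qed.

(* A describable graph is specified by its rank among describable numbers. *)
Lemma KC_describable U : universal U -> exists c, forall n d x,
  describable (code x) n ->
  exists2 k, KC U x (cond_info n d) <= k + c & 2 ^ k <= rank_below n (2 ^ (npairs n).+1).
Proof.
move=> univU; have [c simU] := univU decoder; exists c => n d x Dx.
have [q code_q] := code_surj (rank_below n (code x)).
have /simU [q' /KC_le_size KC_le size_q'] : describes decoder q (cond_info n d) x.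
  by rewrite /describes code_q; apply: eval_decoder.
exists (size q); first exact: leq_trans KC_le size_q'.
apply: leq_trans (code_ge q) _; rewrite code_q.
apply: leq_trans (leq_rank_below n (_ : (code x).+1 <= _)); first by rewrite /= Dx addn1.
by move: Dx; rewrite /describable => /andP [/andP [_ ?] _]; lia.
Qed.

(** * Counting strings by flipping letters *)

Section FlipCount.
Variable N : nat.
Implicit Types (t : N.-tuple bool) (G : N.-tuple bool -> bool).

Definition flip (a : nat) t : N.-tuple bool :=
  [tuple if (i : nat) == a then ~~ tnth t i else tnth t i | i < N].

Definition count_tuples G := \sum_t (G t : nat).

Lemma nth_flip a t p :
  a < N -> nth false (flip a t) p = if p == a then ~~ nth false t p else nth false t p.
Proof.
move=> a_N; case: (ltnP p N) => [p_N|N_p].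
  by rewrite -(tnth_nth false (flip a t) (Ordinal p_N)) tnth_mktuple /= (tnth_nth false).
by rewrite !nth_default ?size_tuple // (gtn_eqF (leq_trans a_N N_p)).
Qed.

Lemma flipK a : involutive (flip a).
Proof.
move=> t; apply: eq_from_tnth => i; rewrite !tnth_mktuple.
by case: (_ == _); rewrite ?negbK.
Qed.

Lemma count_tuples_flip a G : count_tuples G = count_tuples (G \o flip a).
Proof. by rewrite /count_tuples (reindex_inj (inv_inj (flipK a))). Qed.

Lemma eq_count_tuples G1 G2 : G1 =1 G2 -> count_tuples G1 = count_tuples G2.
Proof. by move=> eG; apply: eq_bigr => t _; rewrite eG. Qed.

Lemma count_tuples_true : count_tuples predT = 2 ^ N.
Proof. by rewrite /count_tuples /= sum1_card card_tuple card_bool. Qed.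

(* Flipping [a], [b] or both turns the exclusion of [(true, true)] for letters
   [a, b] into the exclusion of each other value; the four counts sum to
   [3 * count_tuples G]. *)
Lemma count_tuples_pair G a b : a < N -> b < N -> a != b ->
  (forall t, G (flip a t) = G t) -> (forall t, G (flip b t) = G t) ->
  4 * count_tuples (fun t => G t && ~~ (nth false t a && nth false t b)) = 3 * count_tuples G.
Proof.
move=> a_N b_N ab Ga Gb.
set C := fun t => G t && ~~ (nth false t a && nth false t b).
have ab' : (a == b) = false := negbTE ab.
have ba' : (b == a) = false by rewrite eq_sym.
have E1 : count_tuples C = count_tuples (fun t => G t && ~~ (~~ nth false t a && nth false t b)).
  rewrite (count_tuples_flip a); apply: eq_count_tuples => t.
  by rewrite /C /= Ga !nth_flip // eqxx ba'.
have E2 : count_tuples C = count_tuples (fun t => G t && ~~ (nth false t a && ~~ nth false t b)).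
  rewrite (count_tuples_flip b); apply: eq_count_tuples => t.
  by rewrite /C /= Gb !nth_flip // eqxx ab'.
have E3 : count_tuples C =
    count_tuples (fun t => G t && ~~ (~~ nth false t a && ~~ nth false t b)).
  rewrite (count_tuples_flip a) (count_tuples_flip b); apply: eq_count_tuples => t.
  by rewrite /C /= Ga Gb !nth_flip // !eqxx ab' ba'.
have -> : 4 * count_tuples C = count_tuples C + count_tuples C + count_tuples C + count_tuples C.
  by lia.
rewrite {2}E1 {2}E2 {2}E3 /count_tuples -!big_split big_distrr /=; apply: eq_bigr => t _.
by rewrite /C; case: (G t); case: (nth false t a); case: (nth false t b).
Qed.

Lemma count_tuples_bit G c : c < N -> (forall t, G (flip c t) = G t) ->
  2 * count_tuples (fun t => G t && ~~ nth false t c) = count_tuples G.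
Proof.
move=> c_N Gc.
have -> : count_tuples (fun t => G t && ~~ nth false t c) =
          count_tuples (fun t => G t && nth false t c).
  rewrite (count_tuples_flip c); apply: eq_count_tuples => t.
  by rewrite /= Gc nth_flip // eqxx negbK.
rewrite mul2n -addnn {1}(count_tuples_flip c) /count_tuples -big_split; apply: eq_bigr => t _ /=.
by rewrite Gc nth_flip // eqxx; case: (G t); case: (nth false t c).
Qed.

(* By induction on [ks]: the distinctness hypotheses make the constraints
   already imposed invariant under the flips used in [count_tuples_pair]. *)
Lemma count_tuples_avoid c (al be : nat -> nat) (ks : seq nat) : c < N -> uniq ks ->
  (forall k, k \in ks -> [/\ al k < N, be k < N, al k != be k, al k != c & be k != c]) ->
  (forall k k', k \in ks -> k' \in ks -> k != k' ->
     [/\ al k != al k', al k != be k', be k != al k' & be k != be k']) ->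
  2 * 4 ^ size ks * count_tuples (fun t =>
    ~~ nth false t c && all (fun k => ~~ (nth false t (al k) && nth false t (be k))) ks)
  = 3 ^ size ks * 2 ^ N.
Proof.
move=> c_N; elim: ks => [|k ks IHks] /= uniq_ks ks_N ks_neq.
  rewrite -count_tuples_true -(@count_tuples_bit predT c) // muln1 mul1n.
  by congr (2 * _); apply: eq_count_tuples => t; rewrite andbT.
case/andP: uniq_ks => k_ks uniq_ks.
have [al_N be_N al_be al_c be_c] := ks_N k (mem_head _ _).
have sub_ks k' : k' \in ks -> k' \in k :: ks by rewrite inE => ->; rewrite orbT.
rewrite !expnS -[in RHS]mulnA -(IHks uniq_ks); first last.
- by move=> k1 k2 /sub_ks + /sub_ks; apply: ks_neq.
- by move=> k' /sub_ks; apply: ks_N.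
set G := fun t => ~~ nth false t c &&
  all (fun k => ~~ (nth false t (al k) && nth false t (be k))) ks.
have -> : count_tuples (fun t => ~~ nth false t c &&
    (~~ (nth false t (al k) && nth false t (be k)) &&
     all (fun k => ~~ (nth false t (al k) && nth false t (be k))) ks))
  = count_tuples (fun t => G t && ~~ (nth false t (al k) && nth false t (be k))).
  by apply: eq_count_tuples => t; rewrite /G -andbA; congr (_ && _); apply: andbC.
have G_flip a : a = al k \/ a = be k -> forall t, G (flip a t) = G t.
  move=> a_k t; have a_N : a < N by case: a_k => ->.
  have c_a : (c == a) = false by case: a_k => ->; apply/negbTE; rewrite eq_sym.
  rewrite /G nth_flip // c_a; congr (_ && _); apply: eq_in_all => k' k'_ks /=.
  have kk' : k != k' by apply: contraNneq k_ks => ->.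
  have [n1 n2 n3 n4] := ks_neq k k' (mem_head _ _) (sub_ks _ k'_ks) kk'.
  rewrite !nth_flip // (eq_sym (al k')) (eq_sym (be k')).
  by case: a_k => ->; rewrite ?(negbTE n1) ?(negbTE n2) ?(negbTE n3) ?(negbTE n4).
have := count_tuples_pair al_N be_N al_be (G_flip _ (or_introl erefl)) (G_flip _ (or_intror erefl)).
by rewrite -/G; nia.
Qed.

End FlipCount.

(** * Graphs with a far pair are rare *)

Lemma count_far_pair n i j : i < j -> j < n ->
  2 * 4 ^ (n - 2) * count_tuples (fun t : (npairs n).-tuple bool => far_pair (nth false t) n i j)
  = 3 ^ (n - 2) * 2 ^ npairs n.
Proof.
move=> ij jn.
set ks := [seq k <- iota 0 n | (k != i) && (k != j)].
have size_ks : size ks = n - 2.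
  have -> : ks = rem j (rem i (iota 0 n)).
    rewrite (rem_filter i) ?iota_uniq // (rem_filter j) ?filter_uniq ?iota_uniq //.
    by rewrite -filter_predI /ks; apply: eq_filter => k /=; rewrite andbC.
  have j_rem : j \in rem i (iota 0 n).
    rewrite (rem_filter i) ?iota_uniq // mem_filter mem_iota /=.
    by apply/andP; split; [apply/eqP; lia | lia].
  by rewrite (size_rem j_rem) size_rem ?mem_iota ?size_iota //; lia.
have ij_index : pair_index n i j = edge_index n i j by rewrite /edge_index ij.
have ksP k : k \in ks -> [/\ k < n, k != i & k != j].
  by rewrite mem_filter mem_iota => /andP [/andP [? ?] /andP [_ ?]].
rewrite -size_ks -(@count_tuples_avoid _ (pair_index n i j)
  (fun k => edge_index n i k) (fun k => edge_index n j k) ks).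
- congr (_ * _); apply: eq_count_tuples => t; rewrite /far_pair ij /= all_filter.
  congr (_ && _); apply: eq_all => k /=; rewrite /not_common_nbr.
  by case: (k == i); case: (k == j).
- exact: pair_index_lt_npairs.
- by rewrite filter_uniq ?iota_uniq.
- move=> k /ksP [k_n ki kj]; rewrite ij_index.
  by split; try (apply: edge_index_lt_npairs; lia); apply: edge_index_neq; lia.
- move=> k k' /ksP [k_n ki kj] /ksP [k'_n k'i k'j] kk'.
  by split; apply: edge_index_neq; lia.
Qed.

Lemma has_leq_sum (p : pred nat) s : has p s <= \sum_(x <- s) p x.
Proof. by elim: s => [|x s IHs]; rewrite ?big_nil ?big_cons //=; case: (p x) => /=; lia. Qed.

(* A union bound over the pairs [i < j]. *)
Lemma count_has_far_pair n :
  2 * 4 ^ (n - 2) * count_tuples (fun t : (npairs n).-tuple bool => has_far_pair (nth false t) n)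
  <= n * n * (3 ^ (n - 2) * 2 ^ npairs n).
Proof.
set K := 2 * 4 ^ (n - 2); set M := 3 ^ (n - 2) * 2 ^ npairs n.
have -> : n * n * M = \sum_(0 <= i < n) \sum_(0 <= j < n) M.
  by rewrite !sum_nat_const_nat subn0 mulnA.
apply: (@leq_trans (K * \sum_(t : (npairs n).-tuple bool)
    \sum_(0 <= i < n) \sum_(0 <= j < n) far_pair (nth false t) n i j)).
  rewrite leq_mul2l; apply/orP; right; apply: leq_sum => t _.
  apply: leq_trans (has_leq_sum _ _) _; rewrite /index_iota subn0.
  by apply: leq_sum => i _; apply: has_leq_sum.
rewrite exchange_big big_distrr /= big_nat [X in _ <= X]big_nat; apply: leq_sum => i /andP [_ i_n].
rewrite exchange_big big_distrr /= big_nat [X in _ <= X]big_nat; apply: leq_sum => j /andP [_ j_n].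
have [ij|ji] := ltnP i j; first by rewrite /K /M -(count_far_pair ij j_n).
by rewrite big1 ?muln0 // => t _; rewrite /far_pair ltnNge ji.
Qed.

Lemma rank_belowE n t : rank_below n t = \sum_(m < t) describable m n.
Proof. by elim: t => [|t IHt]; rewrite ?big_ord0 // big_ord_recr /= IHt. Qed.

Lemma sum_ord_eqn a t : \sum_(m < t) (a == m :> nat) = (a < t).
Proof.
elim: t => [|t IHt]; first by rewrite big_ord0.
by rewrite big_ord_recr /= IHt ltnS (leq_eqVlt a t); case: ltngtP.
Qed.

(* Every describable number below [2 ^ (npairs n).+1] is the code of a string
   of length [npairs n] with a far pair, or of the all-true string. *)
Lemma rank_below_le_count n : rank_below n (2 ^ (npairs n).+1) <=
  count_tuples (fun t : (npairs n).-tuple bool => has_far_pair (nth false t) n) + 1.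
Proof.
set N := npairs n; set B := 2 ^ N.+1.
set Q := fun t : N.-tuple bool => has_far_pair (nth false t) n || (val t == nseq N true).
have -> : 1 = \sum_(t : N.-tuple bool) (t == [tuple of nseq N true] : nat).
  by rewrite -big_mkcond /= big_pred1_eq.
apply: (@leq_trans (count_tuples Q)); last first.
  rewrite /count_tuples -big_split; apply: leq_sum => t _ /=.
  rewrite /Q; have -> : (val t == nseq N true) = (t == [tuple of nseq N true]) by [].
  by case: has_far_pair; case: (_ == _).
rewrite rank_belowE.
apply: (@leq_trans (\sum_(m < B) \sum_(t : N.-tuple bool) ((code t == m) * Q t))).
  apply: leq_sum => m _; case Dm: (describable m n) => //=.
  have [s [<- Qs]] := describable_tuple Dm.
  by rewrite (bigD1 s) //= eqxx /Q Qs.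
rewrite exchange_big /=; apply: leq_sum => t _.
by rewrite -big_distrl /= sum_ord_eqn; case: (_ < _); rewrite ?mul1n.
Qed.

(** * The edge string of a graph *)

Lemma filter_gt_iota a n : [seq k <- iota 0 n | a < k] = iota a.+1 (n - a.+1).
Proof.
elim: n => [//|n IHn]; rewrite -[n.+1]addn1 iotaD filter_cat IHn /=.
case: ltnP => [an|na] /=; last by rewrite cats0; congr iota; lia.
rewrite (_ : n + 1 - a.+1 = (n - a.+1) + 1); last by lia.
by rewrite iotaD /= (_ : a.+1 + (n - a.+1) = n) //; lia.
Qed.

Section GraphCode.
Variables (n : nat) (adj : rel 'I_n).

Let row (i : 'I_n) := [seq adj i j | j <- [seq j : 'I_n <- enum 'I_n | i < j]].

Let graph_code_rows : graph_code adj = flatten (map row (enum 'I_n)).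
Proof. by []. Qed.

Let val_row_nodes (i : 'I_n) :
  map val [seq j : 'I_n <- enum 'I_n | i < j] = iota i.+1 (n - i.+1).
Proof. by rewrite -(filter_map val (fun k => i < k)) val_enum_ord filter_gt_iota. Qed.

Let size_row i : size (row i) = n - i.+1.
Proof. by rewrite size_map -(size_map val) val_row_nodes size_iota. Qed.

Let shape_rows : shape (map row (enum 'I_n)) = [seq n - k.+1 | k <- iota 0 n].
Proof.
rewrite /shape -map_comp (eq_map (g := (fun k => n - k.+1) \o val)) => [|i].
  by rewrite map_comp val_enum_ord.
by rewrite /= size_row.
Qed.

Let row_startE a : a <= n -> row_start n a = sumn (take a (shape (map row (enum 'I_n)))).
Proof.
rewrite shape_rows -map_take take_iota => a_n; rewrite (_ : minn a n = a); last by lia.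
elim: a a_n => [//|a IHa] a_n; rewrite -addn1 iotaD map_cat sumn_cat -IHa /=; last by lia.
by rewrite addn1 /=; lia.
Qed.

Lemma size_graph_code : size (graph_code adj) = npairs n.
Proof.
rewrite graph_code_rows size_flatten /npairs row_startE // take_oversize //.
by rewrite shape_rows size_map size_iota.
Qed.

Lemma nth_graph_code (i j : 'I_n) :
  i < j -> nth false (graph_code adj) (pair_index n i j) = adj i j.
Proof.
move=> ij; have i_n := ltn_ord i; have j_n := ltn_ord j.
have offset_lt : (j - i).-1 < nth 0 (shape (map row (enum 'I_n))) i.
  by rewrite shape_rows (nth_map 0) ?size_iota // nth_iota //; lia.
rewrite /pair_index (row_startE (ltnW i_n)) graph_code_rows.
rewrite nth_flatten flatten_indexKl // flatten_indexKr //.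
have j_lt : (j - i).-1 < size [seq j0 : 'I_n <- enum 'I_n | i < j0].
  by rewrite -(size_map val) val_row_nodes size_iota; lia.
rewrite (nth_map i) ?size_enum_ord // nth_ord_enum /row (nth_map i) //.
congr (adj i _); apply: val_inj.
by rewrite -(nth_map i 0) // val_row_nodes nth_iota /=; lia.
Qed.

Lemma graph_code_complete :
  (forall i j : 'I_n, i < j -> adj i j) -> graph_code adj = nseq (npairs n) true.
Proof.
move=> complete; rewrite -size_graph_code.
have : all id (graph_code adj).
  rewrite graph_code_rows; apply/allP => b /flattenP [_ /mapP [i _ ->]].
  by move=> /mapP [j]; rewrite mem_filter => /andP [ij _] ->; apply: complete.
by elim: (graph_code adj) => [//|b s IHs] /= /andP [-> /IHs <-].
Qed.

Hypothesis adj_sym : forall i j, adj i j = adj j i.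

Lemma nth_graph_code_edge (i k : 'I_n) :
  i != k -> nth false (graph_code adj) (edge_index n i k) = adj i k.
Proof.
move=> ik; rewrite /edge_index; case: ltngtP => [ik'|ki|/val_inj ik'].
- exact: nth_graph_code.
- by rewrite nth_graph_code // adj_sym.
- by rewrite ik' eqxx in ik.
Qed.

Lemma no_far_pair_near (i j : 'I_n) : i < j ->
  ~~ has_far_pair (nth false (graph_code adj)) n -> adj i j \/ exists k, adj i k && adj k j.
Proof.
move=> ij /hasPn /(_ i); rewrite mem_iota ltn_ord => /(_ isT) /hasPn /(_ j).
rewrite mem_iota ltn_ord => /(_ isT); rewrite /far_pair ij nth_graph_code //= negb_and negbK.
case/orP => [->|]; first by left.
case/allPn => k; rewrite mem_iota /= => k_n.
rewrite /not_common_nbr negb_or negb_or negbK => /andP [/andP [ki kj] /andP [ik jk]].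
right; exists (Ordinal k_n).
have ik' : i != Ordinal k_n by rewrite -(inj_eq val_inj) eq_sym.
have jk' : j != Ordinal k_n by rewrite -(inj_eq val_inj) eq_sym.
by rewrite -(nth_graph_code_edge ik') ik -adj_sym -(nth_graph_code_edge jk') jk.
Qed.

End GraphCode.

(** * Diameter two *)

Lemma diameter_is_two n (adj : rel 'I_n) :
  (forall i j, i != j -> adj i j \/ exists k, adj i k && adj k j) ->
  (exists i j, i != j /\ ~~ adj i j) -> diameter_is adj 2.
Proof.
move=> near [i0 [j0 [ij0 nadj0]]].
have no_walk0 i j : i != j -> ~ walk_le adj i j 0.
  by move=> ij [s [/[!leqn0] /nilP -> _ /= ji]]; move: ij; rewrite ji eqxx.
have no_walk1 i j : i != j -> ~~ adj i j -> ~ walk_le adj i j 1.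
  move=> ij nadj [s [+ + last_s]]; case: s last_s => [|x [|//]] /= last_s _.
    by move: ij; rewrite last_s eqxx.
  by rewrite andbT last_s (negbTE nadj).
have dist2 i j : i != j -> ~~ adj i j -> is_dist adj i j 2.
  move=> ij nadj; split; last by case=> [_|[_|//]]; [apply: no_walk0 | apply: no_walk1].
  case: (near i j ij) => [adj_ij|[k /andP [ik kj]]]; first by rewrite adj_ij in nadj.
  by exists [:: k; j]; split => //=; rewrite ik kj.
split; last by exists i0, j0; apply: dist2.
move=> i j; have [<-|ij] := eqVneq i j.
  by exists 0 => //; split => [|//]; exists [::].
have [adj_ij|nadj] := boolP (adj i j); last by exists 2 => //; apply: dist2.
exists 1 => //; split; last by case=> [_|//]; apply: no_walk0.
by exists [:: j]; split => //=; rewrite adj_ij.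
Qed.

Lemma diameter_is_two_of_code n (adj : rel 'I_n) : (forall i j, adj i j = adj j i) ->
  ~~ has_far_pair (nth false (graph_code adj)) n -> graph_code adj != nseq (npairs n) true ->
  diameter_is adj 2.
Proof.
move=> adj_sym no_far incomplete; apply: diameter_is_two.
  move=> i j ij; case: (ltngtP i j) => [lt_ij|lt_ji|/val_inj eq_ij].
  - exact: no_far_pair_near.
  - case: (no_far_pair_near adj_sym lt_ji no_far) => [adj_ji|[k /andP [jk ki]]].
      by left; rewrite adj_sym.
    by right; exists k; rewrite adj_sym ki adj_sym jk.
  - by rewrite eq_ij eqxx in ij.
have [/existsP [i /existsP [j /andP [ij nadj]]]|] :=
  boolP [exists i : 'I_n, exists j : 'I_n, (i < j) && ~~ adj i j].
  by exists i, j; rewrite neq_ltn ij.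
rewrite negb_exists => /forallP complete.
case/negP: incomplete; apply/eqP/graph_code_complete => i j ij.
by have := complete i; rewrite negb_exists => /forallP /(_ j); rewrite ij negbK.
Qed.

(** * Estimates *)

Lemma exp3_exp4_div5 m : 3 ^ m * 4 ^ (m %/ 5) <= 4 ^ m.
Proof.
have step q r : 3 ^ (5 * q + r) * 4 ^ q <= 4 ^ (5 * q + r).
  elim: q => [|q IHq].
    by rewrite muln0 add0n muln1; elim: r => [//|r IHr]; rewrite !expnS; lia.
  rewrite (_ : 5 * q.+1 + r = 5 + (5 * q + r)); last by lia.
  by rewrite expnD (expnD 4) (_ : 3 ^ 5 = 243) // (_ : 4 ^ 5 = 1024) // expnS; nia.
by have := step (m %/ 5) (m %% 5); rewrite [5 * _]mulnC -divn_eq.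
Qed.

Lemma sqS_leq_exp2 t : t.+1 * t.+1 <= 4 * 2 ^ t.
Proof.
elim: t => [//|t IHt]; case: t IHt => [//|t] IHt; case: t IHt => [//|t] IHt.
by rewrite (expnS 2 t.+2); move: IHt; nia.
Qed.

Lemma sq_leq_exp2_div20 n : n * n <= 1600 * 2 ^ (n %/ 20).
Proof.
have := sqS_leq_exp2 (n %/ 20).
have : n <= 20 * (n %/ 20).+1.
  by have := divn_eq n 20; have := ltn_pmod n (isT : 0 < 20); lia.
by move=> /[dup] n_le /(leq_mul n_le); nia.
Qed.

Lemma exp3_growth c d n : 20 * d <= n -> 20 * (c + 20) <= n ->
  2 ^ (c + d + 3) * (n * n) * 3 ^ (n - 2) <= 4 ^ (n - 2).
Proof.
move=> dn cn; set q := (n - 2) %/ 5; set e := n %/ 20.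
have small : 2 ^ (c + d + 3) * (n * n) <= 4 ^ q.
  apply: leq_trans (leq_mul (leqnn _) (sq_leq_exp2_div20 n)) _.
  rewrite (_ : 4 ^ q = 2 ^ (2 * q)); last by rewrite expnM.
  have : c + d + 3 + 11 + e <= 2 * q by rewrite /q /e; lia.
  rewrite -(leq_exp2l _ _ (isT : 1 < 2)) => /(leq_trans _); apply.
  rewrite -[c + d + 3 + 11 + e]addnA (expnD 2 (c + d + 3)) (expnD 2 11) /e.
  by apply: leq_mul => //; apply: leq_mul.
by apply: leq_trans (exp3_exp4_div5 (n - 2)); rewrite mulnC leq_mul2l small orbT.
Qed.

(* Used with [F] the number of graphs with a far pair and
   [P / Q = n ^ 2 * (3/4) ^ (n - 2)]. *)
Lemma ltn_exp2_ratio k a N F P Q : 0 < Q -> a < N ->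
  2 ^ k <= F + 1 -> 2 * Q * F <= P * 2 ^ N -> 2 ^ (a + 3) * P <= Q -> k + a < N.
Proof.
move=> Q_gt0 aN kF FP PQ.
rewrite -(ltn_exp2l _ _ (isT : 1 < 2)) expnD.
have e3 : 2 ^ (a + 3) = 8 * 2 ^ a by rewrite expnD mulnC.
have aN' : 2 * 2 ^ a <= 2 ^ N by rewrite -expnS leq_exp2l.
have F_small : Q * (16 * (2 ^ a * F)) <= Q * 2 ^ N.
  have := leq_mul (leqnn (8 * 2 ^ a)) FP.
  have := leq_mul PQ (leqnn (2 ^ N)).
  by rewrite e3; nia.
rewrite leq_pmul2l // in F_small.
by have := leq_mul kF (leqnn (2 ^ a)); nia.
Qed.

Lemma describable_rank_small c d n k : 20 * d <= n -> 20 * (c + 20) <= n ->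
  2 ^ k <= rank_below n (2 ^ (npairs n).+1) -> k + (c + d) < npairs n.
Proof.
move=> dn cn rank_k.
apply: (ltn_exp2_ratio _ _ (leq_trans rank_k (rank_below_le_count n))
         _ (_ : _ <= 4 ^ (n - 2))).
- by rewrite expn_gt0.
- by have := npairs_ge n; lia.
- by apply: leq_trans (count_has_far_pair n) _; rewrite mulnA.
- by rewrite mulnA; apply: exp3_growth.
Qed.

Unset Implicit Arguments.

Theorem lemma2 (U : prf) (hU : universal U) (delta : nat -> nat)
  (hdelta : small_o_n delta) :
  exists n0 : nat, forall n : nat, n0 <= n ->
    forall adj : rel 'I_n,
      (forall i j, adj i j = adj j i) -> (forall i, ~~ adj i i) ->
      random_graph U delta adj -> diameter_is adj 2.
Proof.
have [c KC_le] := KC_describable hU.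
have [n1 delta_small] := hdelta 20 isT.
exists (maxn n1 (20 * (c + 20))) => n n_ge adj adj_sym _ adj_random.
have : ~~ describable (code (graph_code adj)) n.
  apply/negP => /(KC_le n (delta n)) [k KC_k rank_k].
  have := describable_rank_small (delta_small n (leq_trans (leq_maxl _ _) n_ge))
    (leq_trans (leq_maxr _ _) n_ge) rank_k.
  move: adj_random; rewrite /random_graph -npairsE; lia.
rewrite describable_code ?size_graph_code // => /norP [no_far incomplete].
exact: diameter_is_two_of_code.
Qed.
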